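(* Let $n$ and $m$ be positive integers and $0<\theta\le 1$, and put $\phi = m(1-\theta)/\theta$. Then for every $x\in\{0,1,\dots,n\}$, $$\binom{n}{x}\theta^x(1-\theta)^{n-x} = \sum_{k=0}^{x}\mathrm{Spillage}(x-k\mid n,k,\phi)\cdot \mathrm{Occ}(k\mid n,m,\theta).$$
   Context: $S(j,k)$ denotes the (central) Stirling numbers of the second kind and $(m)_k = m(m-1)\cdots(m-k+1)$ the falling factorial. The noncentral Stirling numbers of the second kind are $S(n,k,\phi) = \sum_{r=0}^{n-k}\binom{n}{k+r}\phi^{n-k-r}S(k+r,k)$. The spillage mass function, for $0\le k\le n$ and $0<\phi<\infty$, is $\mathrm{Spillage}(r\mid n,k,\phi) = \binom{n}{k+r}\phi^{n-k-r}S(k+r,k)/S(n,k,\phi)$ for $r=0,\dots,n-k$; for $\phi=0$ it is by convention the point mass $\mathrm{Spillage}(r\mid n,k,0)=\mathbb{I}(r=n-k)$. The (extended) occupancy mass function is $\mathrm{Occ}(k\mid n,m,\theta) = \frac{\theta^n}{m^n}(m)_k\,S\!\left(n,k,m\frac{1-\theta}{\theta}\right)$ for $k=0,\dots,n$ (for $\theta=1$ this reads $(m)_kS(n,k)/m^n$). *)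

From mathcomp Require Import all_boot all_order all_algebra.
Set Implicit Arguments. Unset Strict Implicit. Unset Printing Implicit Defensive.
Import Order.TTheory GRing.Theory Num.Theory.
Local Open Scope ring_scope.

Fixpoint stirling2 (n k : nat) : nat :=
  match n, k with
  | O, O => 1%N
  | O, S _ => 0%N
  | S _, O => 0%N
  | S n', S k' => (k'.+1 * stirling2 n' k'.+1 + stirling2 n' k')%N
  end.

Definition nc_stirling2 {R : numFieldType} (n k : nat) (phi : R) : R :=
  \sum_(0 <= r < (n - k).+1) ('C(n, k + r))%:R * phi ^+ (n - k - r) * (stirling2 (k + r) k)%:R.

Definition spillage {R : numFieldType} (r n k : nat) (phi : R) : R :=
  if phi == 0 then (r == (n - k)%N)%:R
  else if (r <= n - k)%N then
    ('C(n, k + r))%:R * phi ^+ (n - k - r) * (stirling2 (k + r) k)%:R / nc_stirling2 n k phi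
  else 0.

Definition occ {R : numFieldType} (k n m : nat) (theta : R) : R :=
  theta ^+ n / (m%:R) ^+ n * (m ^_ k)%:R * nc_stirling2 n k (m%:R * (1 - theta) / theta).

From mathcomp Require Import all_boot all_order all_algebra.
From mathcomp Require Import ring zify.
Import Order.TTheory GRing.Theory Num.Theory.

(* The normaliser S(n,k,phi) of Spillage cancels the factor S(n,k,phi) of
   Occ, so the k-th summand is
   C(n,x) phi^(n-x) theta^n m^-n (m)_k S(x,k).  Summing over k with the
   classical identity sum_k (m)_k S(x,k) = m^x leaves
   C(n,x) phi^(n-x) theta^n m^(x-n), which is the binomial mass once
   phi = m(1-theta)/theta is substituted.  At theta = 1 (phi = 0) the same
   computation holds with the point-mass convention for Spillage. *)

Lemma stirling2_small x k : (x < k)%N -> stirling2 x k = 0%N.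
Proof. by elim: x k => [|x IHx] [|k] //= ltxk; rewrite !IHx //; lia. Qed.

Lemma stirling2nn k : stirling2 k k = 1%N.
Proof. by elim: k => [//|k IHk] /=; rewrite IHk stirling2_small ?muln0. Qed.

Lemma mul_ffactn m k : (m * m ^_ k = m ^_ k.+1 + k * m ^_ k)%N.
Proof.
rewrite ffactnSr; have [le_km | lt_mk] := leqP k m.
  by rewrite [k * _]mulnC -mulnDr subnK // mulnC.
by rewrite ffact_small // !muln0.
Qed.

Lemma sum_ffact_stirling2 m x N : (x < N)%N ->
  (\sum_(0 <= k < N) m ^_ k * stirling2 x k = m ^ x)%N.
Proof.
(* m (m)_k = (m)_(k+1) + k (m)_k mirrors the Stirling recurrence termwise. *)
elim: x N => [|x IHx] [|N] //= lt_xN.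
  by rewrite big_nat_recl //= big1_seq ?ffactn0 // => i _; rewrite muln0.
rewrite expnS -(IHx N.+1 (ltnW lt_xN)) big_distrr /=.
rewrite big_nat_recl //= muln0 add0n.
under eq_bigr do rewrite mulnDr.
under [in RHS]eq_bigr do rewrite mulnA mul_ffactn mulnDl.
rewrite !big_split /= addnC; congr (_ + _).
  by rewrite [RHS]big_nat_recr //= [stirling2 x N]stirling2_small // muln0 addn0.
by rewrite [RHS]big_nat_recl //= mul0n add0n; apply: eq_bigr => i _; ring.
Qed.

Local Open Scope ring_scope.

Lemma nc_stirling2_at0 (R : numFieldType) n k : (k <= n)%N ->
  nc_stirling2 n k (0 : R) = (stirling2 n k)%:R.
Proof.
move=> le_kn; rewrite /nc_stirling2 big_nat_recr //= subnKC // subnn binn.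
rewrite expr0 mulr1 mul1r big1_seq ?add0r // => r.
rewrite mem_index_iota => /andP[_ lt_r].
by rewrite expr0n (_ : (n - k - r == 0)%N = false) ?mulr0 ?mul0r //; apply/eqP; lia.
Qed.

Lemma nc_stirling2_gt0 (R : numFieldType) n k (phi : R) : (k <= n)%N ->
  0 < phi -> 0 < nc_stirling2 n k phi.
Proof.
move=> le_kn phi_gt0; rewrite /nc_stirling2 big_nat_recl // addn0 stirling2nn.
rewrite mulr1 ltr_wpDr //.
  by apply: sumr_ge0 => i _; rewrite !mulr_ge0 ?ler0n ?exprn_ge0 ?ltW.
by rewrite mulr_gt0 ?exprn_gt0 // ltr0n bin_gt0.
Qed.

Lemma spillage_mul_nc_stirling2 (R : numFieldType) n k x (phi : R) :
  0 <= phi -> (k <= x <= n)%N ->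
  spillage (x - k) n k phi * nc_stirling2 n k phi
  = ('C(n, x))%:R * phi ^+ (n - x) * (stirling2 x k)%:R.
Proof.
move=> phi_ge0 /andP[le_kx le_xn]; have le_kn := leq_trans le_kx le_xn.
rewrite /spillage; have [-> | phi_neq0] := eqVneq phi 0.
  rewrite nc_stirling2_at0 // eqn_sub2rE // expr0n subn_eq0.
  have [-> | ne_xn] := eqVneq x n; first by rewrite leqnn binn /= !mul1r.
  by rewrite leqNgt ltn_neqAle ne_xn le_xn /= mulr0 !mul0r.
have phi_gt0 : 0 < phi by rewrite lt_def phi_neq0.
rewrite ifT; last by lia.
have -> : (n - k - (x - k) = n - x)%N by lia.
by rewrite subnKC // mulfVK // gt_eqF // nc_stirling2_gt0.
Qed.

Theorem theorem4 (R : realFieldType) (n m : nat) (theta : R) :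
  (0 < n)%N -> (0 < m)%N -> 0 < theta -> theta <= 1 ->
  let phi := m%:R * (1 - theta) / theta in
  forall x : nat, (x <= n)%N ->
    ('C(n, x))%:R * theta ^+ x * (1 - theta) ^+ (n - x)
    = \sum_(0 <= k < x.+1) spillage (x - k) n k phi * occ k n m theta.
Proof.
move=> _ m_gt0 theta_gt0 theta_le1 phi x le_xn.
have m_neq0 : (m%:R : R) != 0 by rewrite pnatr_eq0 -lt0n.
have theta_neq0 : theta != 0 by rewrite gt_eqF.
have phi_ge0 : 0 <= phi by rewrite divr_ge0 ?mulr_ge0 ?ler0n ?subr_ge0 // ltW.
set c := ('C(n, x))%:R * phi ^+ (n - x) * theta ^+ n / m%:R ^+ n.
have summandE k : (0 <= k < x.+1)%N ->
    spillage (x - k) n k phi * occ k n m theta = c * (m ^_ k * stirling2 x k)%:R.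
  move=> /andP[_ le_kx]; rewrite /occ -/phi mulrCA !mulrA -mulrA.
  rewrite spillage_mul_nc_stirling2 ?le_xn ?andbT //.
  by rewrite /c natrM; ring.
rewrite (eq_big_nat _ _ summandE) -mulr_sumr -natr_sum sum_ffact_stirling2 //.
rewrite /c /phi natrX.
have [d ->] : exists d, n = (x + d)%N by exists (n - x)%N; rewrite subnKC.
rewrite addKn !exprD expr_div_n exprMn.
by field; rewrite ?expf_neq0.
Qed.
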